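(* For every Greene–Kleitman chain $C$ of length $h\ge 5$ in $Q_n$ and any edge $f$ of $C$, there exist $h-1$ pairwise edge-disjoint flipping $4$-cycles, one between $C$ and each of its $h-1$ children, none of which uses the edge $f$.
   Context: $Q_n$ is the hypercube on $\{0,1\}^n$. Let $D$ be the set of bitstrings (including the empty string) with equally many $0$s and $1$s such that every prefix has at least as many $0$s as $1$s. A (Greene–Kleitman) chain of length $h$ is encoded as a string of length $n$ over $\{0,1,*\}$ of the form $u_0*u_1*\cdots*u_{h-1}*u_h$ with all $u_j\in D$; it is the path in $Q_n$ whose vertices are obtained by replacing the $*$s by $i$ ones followed by $h-i$ zeros, $i=0,1,\ldots,h$. A chain $C'$ of length $h-2$ is a child of a chain $C$ of length $h$ if $C'$ is obtained from $C$ by replacing two consecutive $*$s by $0$ and $1$, respectively; a chain of length $h$ has exactly $h-1$ children. A flipping $4$-cycle between two vertex-disjoint paths $P,P'$ is a $4$-cycle in $Q_n$ that shares exactly one edge with each of the two paths. *)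

From HB Require Import structures.
From mathcomp Require Import all_boot.
Set Implicit Arguments. Unset Strict Implicit. Unset Printing Implicit Defensive.

Inductive sym := S0 | S1 | Star.

Definition sym_eqb (a b : sym) : bool :=
  match a, b with S0, S0 | S1, S1 | Star, Star => true | _, _ => false end.
Lemma sym_eqP : Equality.axiom sym_eqb.
Proof. by case; case; constructor. Qed.
HB.instance Definition _ := hasDecEq.Build sym sym_eqP.

(* Vertices of Q_n: bitstrings (seq bool of size n), true = 1, false = 0. *)
Definition vertex := seq bool.

Definition adj (a b : vertex) : bool :=
  (size a == size b) && (count (fun p : bool * bool => p.1 != p.2) (zip a b) == 1).

Definition inD (u : seq sym) : bool :=
  [&& all (fun x => x != Star) u,
      count_mem S0 u == count_mem S1 u &
      all (fun m => count_mem S1 (take m u) <= count_mem S0 (take m u))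
          (iota 0 (size u).+1)].

(* split a word at its stars: u_0 * u_1 * ... * u_h  |->  [u_0; ...; u_h] *)
Fixpoint split_stars (w : seq sym) : seq (seq sym) :=
  match w with
  | [::] => [:: [::]]
  | Star :: s => [::] :: split_stars s
  | x :: s => match split_stars s with
              | [::] => [:: [:: x]]
              | p :: ps => (x :: p) :: ps
              end
  end.

Definition is_chain (w : seq sym) : bool := all inD (split_stars w).

Definition chain_len (w : seq sym) : nat := count_mem Star w.

Fixpoint fill_k (k i : nat) (w : seq sym) : vertex :=
  match w with
  | [::] => [::]
  | S0 :: s => false :: fill_k k i s
  | S1 :: s => true :: fill_k k i s
  | Star :: s => (k < i) :: fill_k k.+1 i s
  end.

Definition chain_vertex (w : seq sym) (i : nat) : vertex := fill_k 0 i w.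

Definition chain_path (w : seq sym) : seq vertex :=
  [seq chain_vertex w i | i <- iota 0 (chain_len w).+1].

Definition path_edges (p : seq vertex) : seq (vertex * vertex) := zip p (behead p).

Definition same_edge (e f : vertex * vertex) : bool :=
  ((e.1 == f.1) && (e.2 == f.2)) || ((e.1 == f.2) && (e.2 == f.1)).

Definition edge_in (e : vertex * vertex) (E : seq (vertex * vertex)) : bool :=
  has (same_edge e) E.

Fixpoint child_k (k j : nat) (w : seq sym) : seq sym :=
  match w with
  | [::] => [::]
  | Star :: s => (if k == j then S0 else if k == j.+1 then S1 else Star)
                   :: child_k k.+1 j s
  | x :: s => x :: child_k k j s
  end.

Definition child (j : nat) (w : seq sym) : seq sym := child_k 0 j w.

Definition cycle4 := (vertex * vertex * vertex * vertex)%type.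

Definition cyc_edges (c : cycle4) : seq (vertex * vertex) :=
  let: (a, b, c, d) := c in [:: (a, b); (b, c); (c, d); (d, a)].

Definition is_4cycle (n : nat) (c : cycle4) : Prop :=
  let: (a, b, c', d) := c in
  [/\ all (fun v : vertex => size v == n) [:: a; b; c'; d],
      uniq [:: a; b; c'; d] &
      all (fun e : vertex * vertex => adj e.1 e.2) (cyc_edges c)].

Definition vertex_disjoint (p q : seq vertex) : Prop :=
  forall v, v \in p -> v \notin q.

Definition flipping (n : nat) (c : cycle4) (p q : seq vertex) : Prop :=
  [/\ vertex_disjoint p q, is_4cycle n c,
      count (fun e => edge_in e (path_edges p)) (cyc_edges c) = 1 &
      count (fun e => edge_in e (path_edges q)) (cyc_edges c) = 1].

Definition edge_disjoint (c c' : cycle4) : Prop :=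
  forall e, e \in cyc_edges c -> ~~ edge_in e (cyc_edges c').

(* Write X_0, ..., X_h for the vertices of C (X_m has its first m stars set
   to 1) and read every vertex through its bits at the star positions of C.
   A vertex of C never shows an ascent (a star with bit 0 followed by a star
   with bit 1), while every vertex of the child C_j shows exactly one, at j:
   its stars j, j+1 carry 0, 1 and the remaining stars are sorted.
   For the child C_j pick an edge X_k X_(k+1) of C with k not in {i, j, j+1},
   injectively in j (possible as h >= 5).  Toggling in X_k the star k and the
   star j+1 (if k < j) or j (if k > j+1) gives a 4-cycle X_k X_(k+1) Y Y' with
   Y Y' an edge of C_j.  Its three edges off C all touch a vertex with an
   ascent at j and no other ascents, so cycles of different children can share
   only edges of C, and those were chosen distinct and different from f. *)

From mathcomp Require Import all_boot zify.
Set Implicit Arguments. Unset Strict Implicit. Unset Printing Implicit Defensive.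

Fixpoint fill (P : nat -> bool) (k : nat) (w : seq sym) : vertex :=
  match w with
  | [::] => [::]
  | S0 :: s => false :: fill P k s
  | S1 :: s => true :: fill P k s
  | Star :: s => P k :: fill P k.+1 s
  end.

Definition toggle (s : nat) (P : nat -> bool) (t : nat) : bool := P t (+) (t == s).

(* The number of stars of [child j w] preceding the position of star t of [w]. *)
Definition rank (j t : nat) : nat := t - (j < t) - (j.+1 < t).

Definition child_pattern (j m t : nat) : bool :=
  if t == j then false else if t == j.+1 then true else rank j t < m.

Lemma fill_kE k m w : fill_k k m w = fill (fun t => t < m) k w.
Proof. by elim: w k => [|[] s IH] k //=; rewrite IH. Qed.

Lemma fill_child_k j m k w :
  fill_k (rank j k) m (child_k k j w) = fill (child_pattern j m) k w.
Proof.
elim: w k => [|[] s IH] k //=; rewrite ?IH // -IH /child_pattern.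
case: eqP => [->|kj] /=; first by have -> : rank j j.+1 = rank j j by rewrite /rank; lia.
case: eqP => [->|kj1] /=; first by have -> : rank j j.+2 = rank j j.+1 by rewrite /rank; lia.
by have -> : rank j k.+1 = (rank j k).+1 by rewrite /rank; lia.
Qed.

Lemma size_fill P k w : size (fill P k w) = size w.
Proof. by elim: w k => [|[] s IH] k //=; rewrite IH. Qed.

Lemma eq_fill P Q k w : P =1 Q -> fill P k w = fill Q k w.
Proof. by move=> PQ; elim: w k => [|[] s IH] k //=; rewrite IH ?PQ. Qed.

Lemma count_fill_diff P Q k w :
  count (fun p : bool * bool => p.1 != p.2) (zip (fill P k w) (fill Q k w)) =
  count (fun t => P t != Q t) (iota k (count_mem Star w)).
Proof. by elim: w k => [|[] s IH] k //=; rewrite IH. Qed.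

Lemma mask_fill P k w :
  mask [seq x == Star | x <- w] (fill P k w) = map P (iota k (count_mem Star w)).
Proof. by elim: w k => [|[] s IH] k //=; rewrite IH. Qed.

Lemma count_child_k j k w :
  count_mem Star (child_k k j w) =
  count (fun t => (t != j) && (t != j.+1)) (iota k (count_mem Star w)).
Proof.
elim: w k => [|[] s IH] k //=; rewrite IH //.
by case: (k =P j) => //= _; case: (k =P j.+1).
Qed.

Lemma count_iota_neq2 j k n :
  count (fun t => (t != j) && (t != j.+1)) (iota k n) =
  n - (k <= j < k + n) - (k <= j.+1 < k + n).
Proof. by elim: n k => [|n IH] k //=; rewrite IH; case: (k =P j); case: (k =P j.+1); lia. Qed.

Lemma mem_zip (T : eqType) (s t : seq T) x y :
  (x, y) \in zip s t -> (x \in s) && (y \in t).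
Proof.
elim: s t => [|a s IH] [|b t] //=.
rewrite !inE => /orP [/eqP [-> ->]|/IH /andP [-> ->]]; by rewrite ?eqxx ?orbT.
Qed.

Lemma edge_in_path_edges e p : edge_in e (path_edges p) -> (e.1 \in p) && (e.2 \in p).
Proof.
case/hasP => [[u v]] /mem_zip /andP [up /mem_behead vp].
by case/orP => /andP [/eqP -> /eqP ->] /=; rewrite ?up ?vp.
Qed.

Lemma edge_in_path_edgesF e p :
  (e.1 \notin p) || (e.2 \notin p) -> edge_in e (path_edges p) = false.
Proof. by apply: contraTF => /edge_in_path_edges; rewrite negb_or !negbK. Qed.

Lemma path_edges_map (f : nat -> vertex) a n :
  path_edges (map f (iota a n.+1)) = map (fun m => (f m, f m.+1)) (iota a n).
Proof. by elim: n a => [|n IH] a //; rewrite /path_edges /= -IH. Qed.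

Section StarPatterns.

Variable w : seq sym.
Local Notation h := (count_mem Star w).
Local Notation X := (chain_vertex w).
Local Notation Y j := (chain_vertex (child j w)).

Definition star_bit (v : vertex) (t : nat) : bool :=
  nth false (mask [seq x == Star | x <- w] v) t.

Definition ascent (v : vertex) (t : nat) : bool := ~~ star_bit v t && star_bit v t.+1.

Lemma star_bit_fill P t : star_bit (fill P 0 w) t = (t < h) && P t.
Proof.
rewrite /star_bit mask_fill; case: ltnP => Ht.
  by rewrite (nth_map 0) ?size_iota // nth_iota.
by rewrite nth_default // size_map size_iota.
Qed.

Lemma ascent_fill P t : ascent (fill P 0 w) t = [&& t.+1 < h, ~~ P t & P t.+1].
Proof. by rewrite /ascent !star_bit_fill; case: (P t); case: (P t.+1); lia. Qed.

Lemma adj_fill P Q s : s < h -> (forall t, (P t != Q t) = (t == s)) ->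
  adj (fill P 0 w) (fill Q 0 w).
Proof.
move=> Hs PQ; rewrite /adj !size_fill eqxx count_fill_diff (eq_count PQ) /=.
by rewrite (count_uniq_mem s (iota_uniq 0 h)) mem_iota Hs.
Qed.

Definition square (P : nat -> bool) (a b : nat) : cycle4 :=
  (fill P 0 w, fill (toggle a P) 0 w, fill (toggle b (toggle a P)) 0 w,
   fill (toggle b P) 0 w).

Lemma square_4cycle P a b : a < h -> b < h -> a != b ->
  is_4cycle (size w) (square P a b).
Proof.
move=> Ha Hb ab; split; first by rewrite /= !size_fill eqxx.
  (* the bits at the stars a and b already separate the four vertices *)
  apply: (@map_uniq _ _ (fun v => (star_bit v a, star_bit v b))).
  rewrite /= !star_bit_fill Ha Hb /toggle !eqxx eq_sym (negbTE ab) !inE.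
  by case: (P a); case: (P b).
rewrite /= !andbT; apply/and4P; split;
  [apply: (adj_fill Ha) | apply: (adj_fill Hb) | apply: (adj_fill Ha) | apply: (adj_fill Hb)];
  by move=> t; rewrite /toggle; case: (P t); case: (t == a); case: (t == b).
Qed.

Lemma chain_vertexE m : X m = fill (fun t => t < m) 0 w.
Proof. exact: fill_kE. Qed.

Lemma child_vertexE j m : Y j m = fill (child_pattern j m) 0 w.
Proof. exact: (fill_child_k j m 0 w). Qed.

Lemma chain_len_child j : j.+1 < h -> chain_len (child j w) = h - 2.
Proof. by move=> Hj; rewrite /chain_len /child count_child_k count_iota_neq2; lia. Qed.

Lemma chain_vertex_inj a b : a <= h -> b <= h -> X a = X b -> a = b.
Proof.
move=> Ha Hb /(congr1 (star_bit ^~ (minn a b))).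
by rewrite !chain_vertexE !star_bit_fill; lia.
Qed.

Lemma ascent_chain_vertex m t : ascent (X m) t = false.
Proof. by rewrite chain_vertexE ascent_fill; lia. Qed.

Lemma ascent_child_vertex j m t : j.+1 < h -> ascent (Y j m) t = (t == j).
Proof.
move=> Hj; rewrite child_vertexE ascent_fill /child_pattern /rank.
by repeat case: ifP => ?; lia.
Qed.

Lemma ascent_chain_path v t : v \in chain_path w -> ascent v t = false.
Proof. by case/mapP => m _ ->; exact: ascent_chain_vertex. Qed.

Lemma ascent_child_path j v t : j.+1 < h ->
  v \in chain_path (child j w) -> ascent v t = (t == j).
Proof. by move=> Hj /mapP [m _ ->]; exact: ascent_child_vertex. Qed.

Lemma child_vertex_notin_chain_path j m : j.+1 < h -> Y j m \notin chain_path w.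
Proof.
move=> Hj; apply/negP => /(ascent_chain_path j).
by rewrite ascent_child_vertex // eqxx.
Qed.

Lemma chain_vertex_notin_child_path j m : j.+1 < h -> X m \notin chain_path (child j w).
Proof.
move=> Hj; apply/negP => /(ascent_child_path j Hj).
by rewrite ascent_chain_vertex eqxx.
Qed.

Lemma chain_edge_in_path k : k < h -> edge_in (X k, X k.+1) (path_edges (chain_path w)).
Proof.
move=> Hk; apply/hasP; exists (X k, X k.+1); last by rewrite /same_edge !eqxx.
by rewrite /chain_path path_edges_map; apply: map_f; rewrite mem_iota.
Qed.

Lemma child_edge_in_path j m : j.+1 < h -> m < h - 2 ->
  edge_in (Y j m.+1, Y j m) (path_edges (chain_path (child j w))).
Proof.
move=> Hj Hm; apply/hasP; exists (Y j m, Y j m.+1); last by rewrite /same_edge !eqxx orbT.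
by rewrite /chain_path chain_len_child // path_edges_map; apply: map_f; rewrite mem_iota.
Qed.

Definition admissible j k := [&& j.+1 < h, k < h, k != j & k != j.+1].

Definition flip_cycle j k := square (fun t => t < k) k (if k < j then j.+1 else j).

Lemma flip_cycleE j k : k != j -> k != j.+1 ->
  flip_cycle j k = (X k, X k.+1, Y j (rank j k).+1, Y j (rank j k)).
Proof.
move=> kj kj1; rewrite /flip_cycle /square !chain_vertexE !child_vertexE.
congr (_, _, _, _); apply: eq_fill => t; rewrite /toggle /child_pattern /rank;
  by repeat case: ifP => ?; lia.
Qed.

Lemma flip_cycle_flipping j k : admissible j k ->
  flipping (size w) (flip_cycle j k) (chain_path w) (chain_path (child j w)).
Proof.
case/and4P => Hj Hk kj kj1; split.
- move=> v /(ascent_chain_path j) vC; apply/negP => /(ascent_child_path j Hj).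
  by rewrite vC eqxx.
- by apply: square_4cycle => //; case: ifP; lia.
- by rewrite flip_cycleE //= chain_edge_in_path // !edge_in_path_edgesF //=
    ?child_vertex_notin_chain_path ?orbT.
- rewrite flip_cycleE //= child_edge_in_path //; last by rewrite /rank; lia.
  by rewrite !edge_in_path_edgesF //= ?chain_vertex_notin_child_path ?orbT.
Qed.

Definition edge_ascent (e : vertex * vertex) t := ascent e.1 t || ascent e.2 t.

Lemma same_edge_ascent e e' t : same_edge e e' -> edge_ascent e t = edge_ascent e' t.
Proof.
by case: e e' => [u v] [u' v'] /orP [] /andP [/= /eqP -> /eqP ->]; rewrite /edge_ascent // orbC.
Qed.

Lemma flip_cycle_edges j k e : admissible j k -> e \in cyc_edges (flip_cycle j k) ->
  (e = (X k, X k.+1) \/ edge_ascent e j) /\ (forall t, edge_ascent e t -> t = j).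
Proof.
case/and4P => Hj _ kj kj1; rewrite flip_cycleE // !inE.
case/or4P => /eqP ->; split=> [|t]; rewrite /edge_ascent /= ?ascent_chain_vertex
  ?ascent_child_vertex //= ?eqxx ?orbb ?orbT ?orbF; by [left | right | move/eqP].
Qed.

Lemma same_chain_edge a b : a < h -> b < h ->
  same_edge (X a, X a.+1) (X b, X b.+1) -> a = b.
Proof.
move=> Ha Hb /orP [] /andP [/eqP E1 /eqP E2].
  exact: chain_vertex_inj (ltnW Ha) (ltnW Hb) E1.
by move: (chain_vertex_inj (ltnW Ha) Hb E1) (chain_vertex_inj Ha (ltnW Hb) E2); lia.
Qed.

Lemma chain_edge_in_flip_cycle a j k e : a < h -> admissible j k ->
  e \in cyc_edges (flip_cycle j k) -> same_edge (X a, X a.+1) e -> a = k.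
Proof.
move=> Ha adm /(flip_cycle_edges adm) [[-> | asc] _] same.
  by apply: same_chain_edge => //; case/and4P: adm.
by move: asc; rewrite -(same_edge_ascent _ same) /edge_ascent !ascent_chain_vertex.
Qed.

Lemma flip_cycles_same_edge j k j' k' e e' : admissible j k -> admissible j' k' ->
  e \in cyc_edges (flip_cycle j k) -> e' \in cyc_edges (flip_cycle j' k') ->
  same_edge e e' -> j = j' \/ k = k'.
Proof.
move=> adm adm' He He' same.
have [[E | asc] _] := flip_cycle_edges adm He.
  right; apply: (chain_edge_in_flip_cycle _ adm' He'); first by case/and4P: adm.
  by rewrite -E.
left; apply: (proj2 (flip_cycle_edges adm' He')).
by rewrite -(same_edge_ascent _ same).
Qed.

End StarPatterns.

(* (j + 2) mod (h - 1), then shifted past i *)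
Definition assigned_edge (h i j : nat) : nat :=
  let r := if j.+3 < h then j.+2 else j.+3 - h in r + (i <= r).

Lemma assigned_edge_spec h i j : 5 <= h -> i < h -> j.+1 < h ->
  let k := assigned_edge h i j in [&& k < h, k != i, k != j & k != j.+1].
Proof. by rewrite /assigned_edge; case: ifP; lia. Qed.

Lemma assigned_edge_inj h i j j' : 5 <= h -> j.+1 < h -> j'.+1 < h ->
  assigned_edge h i j = assigned_edge h i j' -> j = j'.
Proof. by rewrite /assigned_edge; case: ifP; case: ifP; lia. Qed.

Theorem lemma13 (n : nat) (w : seq sym) (i : nat) :
  size w = n -> is_chain w -> 5 <= chain_len w -> i < chain_len w ->
  let f := (chain_vertex w i, chain_vertex w i.+1) in
  exists cyc : nat -> cycle4,
    [/\ (forall j, j < (chain_len w).-1 ->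
           flipping n (cyc j) (chain_path w) (chain_path (child j w))),
        (forall j k, j < (chain_len w).-1 -> k < (chain_len w).-1 -> j <> k ->
           edge_disjoint (cyc j) (cyc k)) &
        (forall j, j < (chain_len w).-1 -> ~~ edge_in f (cyc_edges (cyc j)))].
Proof.
move=> <- _ h5 hi f; rewrite /chain_len in h5 hi *.
set h := count_mem Star w in h5 hi *.
have adm j : j < h.-1 -> admissible w j (assigned_edge h i j) && (assigned_edge h i j != i).
  by move=> hj; have := @assigned_edge_spec h i j h5 hi; rewrite /admissible; lia.
exists (fun j => flip_cycle w j (assigned_edge h i j)); split.
- by move=> j /adm /andP [/flip_cycle_flipping].
- move=> j k hj hk jk e He; apply/negP => /hasP [e' He' same].
  have [/andP [admj _] /andP [admk _]] := (adm j hj, adm k hk).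
  case: (flip_cycles_same_edge admj admk He He' same) => // same_k.
  by apply: jk; apply: (assigned_edge_inj h5 _ _ same_k); lia.
- move=> j /adm /andP [admj ki]; apply/negP => /hasP [e' He' same].
  by move: ki; rewrite -(chain_edge_in_flip_cycle hi admj He' same) eqxx.
Qed.
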